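(* Let $\mathcal G$ be a finite connected groupoid and $\alpha=(S_g,\alpha_g)_{g\in\mathcal G}$ a unital group-type partial action of $\mathcal G$ on a ring $S=\bigoplus_{y\in\mathcal G_0}S_y$, with $S_g=S1_g$. Let $x\in\mathcal G_0$ and $\tau=\{\tau_y\}_{y\in\mathcal G_0}$ a transversal in $\mathcal G$ for $x$ with $S_{\tau_y^{-1}}=S_x$ and $S_{\tau_y}=S_y$ for all $y\in\mathcal G_0$, and put $\tau(g)=\tau_{t(g)}^{-1}g\tau_{s(g)}\in\mathcal G(x)$ for $g\in\mathcal G$. Every $a\in S$ can be written uniquely as $a=\sum_{y\in\mathcal G_0}\alpha_{\tau_y}(a_{x,y})$ with $a_{x,y}\in S_x$. Then $a\in S^{\alpha_{\mathcal G}}$ if and only if $$\alpha_{\tau(g)}\big(a_{x,s(g)}1_{\tau(g)^{-1}}\big)=a_{x,t(g)}1_{\tau(g)}\quad\text{for all }g\in\mathcal G.$$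
   Context: A groupoid is a small category with all morphisms invertible; $\mathcal G_0$ is the set of objects (identified with identity morphisms), $s(g),t(g)$ source and target, $\mathcal G(x,y)=\{g:s(g)=x,t(g)=y\}$, $\mathcal G(x)=\mathcal G(x,x)$ the isotropy group; $gh$ is defined iff $s(g)=t(h)$; connected means $\mathcal G(x,y)\neq\emptyset$ for all $x,y$. A partial action $\alpha=(S_g,\alpha_g)_{g\in\mathcal G}$ on a ring $S$: for each $g$, $S_{t(g)}$ is an ideal of $S$, $S_g$ an ideal of $S_{t(g)}$, $\alpha_g:S_{g^{-1}}\to S_g$ a ring isomorphism; $\alpha_x=\mathrm{id}_{S_x}$ for $x\in\mathcal G_0$; for composable $(g,h)$, $\alpha_h^{-1}(S_{g^{-1}}\cap S_h)\subseteq S_{(gh)^{-1}}$ and $\alpha_g\alpha_h(a)=\alpha_{gh}(a)$ there. Unital: $S_g=S1_g$ with $1_g$ a central idempotent. A transversal in $\mathcal G$ for $x$ is a family $\{\tau_y\}_{y\in\mathcal G_0}$ with $\tau_y\in\mathcal G(x,y)$ and $\tau_x=x$. For connected $\mathcal G$, $\alpha$ is group-type if there exist $x\in\mathcal G_0$ and a transversal $\tau$ for $x$ with $S_{\tau_y^{-1}}=S_x$ and $S_{\tau_y}=S_y$ for all $y$. The invariant subring is $S^{\alpha_{\mathcal G}}=\{a\in S:\alpha_g(a1_{g^{-1}})=a1_g\ \forall g\in\mathcal G\}$. *)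

From mathcomp Require Import all_boot all_algebra.
Set Implicit Arguments. Unset Strict Implicit. Unset Printing Implicit Defensive.
Import GRing.Theory.
Local Open Scope ring_scope.

(* A groupoid: morphisms in G, objects in O (object x identified with the
   identity morphism idm x), source s, target t, inverse inv, and a total
   function mul which is meaningful only on composable pairs (s g = t h). *)
Record is_groupoid (G O : Type) (s t : G -> O) (idm : O -> G)
    (inv : G -> G) (mul : G -> G -> G) : Prop := IsGroupoid {
  gpd_s_idm : forall x, s (idm x) = x;
  gpd_t_idm : forall x, t (idm x) = x;
  gpd_s_mul : forall g h, s g = t h -> s (mul g h) = s h;
  gpd_t_mul : forall g h, s g = t h -> t (mul g h) = t g;
  gpd_mulA : forall g h k, s g = t h -> s h = t k ->
               mul (mul g h) k = mul g (mul h k);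
  gpd_mul1g : forall g, mul (idm (t g)) g = g;
  gpd_mulg1 : forall g, mul g (idm (s g)) = g;
  gpd_s_inv : forall g, s (inv g) = t g;
  gpd_t_inv : forall g, t (inv g) = s g;
  gpd_mulVg : forall g, mul (inv g) g = idm (s g);
  gpd_mulgV : forall g, mul g (inv g) = idm (t g)
}.

Definition gpd_connected (G O : Type) (s t : G -> O) : Prop :=
  forall x y : O, exists g : G, s g = x /\ t g = y.

Definition inS (S : pzRingType) (e a : S) : Prop := exists b : S, a = b * e.

Definition central_idem (S : pzRingType) (e : S) : Prop :=
  e * e = e /\ forall b : S, e * b = b * e.

(* Unital partial action alpha = (S_g, alpha_g) of the groupoid on S,
   with S_g = S 1_g, 1_g = e g a central idempotent. *)
Definition unital_partial_action (G O : Type) (s t : G -> O) (idm : O -> G)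
    (inv : G -> G) (mul : G -> G -> G) (S : pzRingType)
    (e : G -> S) (alpha : G -> S -> S) : Prop :=
  (forall g, central_idem (e g)) /\
  (forall g a, inS (e g) a -> inS (e (idm (t g))) a) /\
  (forall g a, inS (e (inv g)) a -> inS (e g) (alpha g a)) /\
  (forall g a b, inS (e (inv g)) a -> inS (e (inv g)) b ->
      alpha g (a + b) = alpha g a + alpha g b) /\
  (forall g a b, inS (e (inv g)) a -> inS (e (inv g)) b ->
      alpha g (a * b) = alpha g a * alpha g b) /\
  (forall g a b, inS (e (inv g)) a -> inS (e (inv g)) b ->
      alpha g a = alpha g b -> a = b) /\
  (forall g c, inS (e g) c -> exists2 a, inS (e (inv g)) a & alpha g a = c) /\
  (forall x a, inS (e (idm x)) a -> alpha (idm x) a = a) /\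
  (forall g h a, s g = t h -> inS (e (inv h)) a ->
      inS (e (inv g)) (alpha h a) ->
      inS (e (inv (mul g h))) a /\ alpha g (alpha h a) = alpha (mul g h) a).

Definition direct_sum_objects (O : finType) (S : pzRingType) (ex : O -> S) : Prop :=
  forall a : S,
    (exists f : O -> S, (forall y, inS (ex y) (f y)) /\ a = \sum_(y : O) f y) /\
    (forall f f' : O -> S, (forall y, inS (ex y) (f y)) ->
       (forall y, inS (ex y) (f' y)) ->
       \sum_(y : O) f y = \sum_(y : O) f' y -> forall y, f y = f' y).

Definition in_invariant_subring (G : Type) (S : pzRingType) (inv : G -> G)
    (e : G -> S) (alpha : G -> S -> S) (a : S) : Prop :=
  forall g, alpha g (a * e (inv g)) = a * e g.

From mathcomp Require Import all_boot all_algebra.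
Import GRing.Theory.
Local Open Scope ring_scope.

Set Implicit Arguments.
Unset Strict Implicit.
Unset Printing Implicit Defensive.

(* Each alpha_{tau_y} is a ring isomorphism S_x -> S_y, so the decomposition
   S = (+)_y S_y transports to unique coordinates a_{x,y} in S_x.  For
   g : y -> z, a 1_{g^-1} only sees the component alpha_{tau_y}(a_{x,y}) and
   a 1_g only alpha_{tau_z}(a_{x,z}).  Writing g tau_y = tau_z tau(g), the
   composition law of the partial action gives
   alpha_{tau_y}(1_{tau(g)^-1}) = 1_{g^-1}, alpha_{tau_z}(1_{tau(g)}) = 1_g and
   alpha_g o alpha_{tau_y} = alpha_{tau_z} o alpha_{tau(g)} on S_{tau(g)^-1};
   hence invariance at g is the image of the condition at tau(g) under the
   injective map alpha_{tau_z}. *)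
Section Ideals.

Variable S : pzRingType.
Implicit Types e f a b : S.

Lemma inS_self e : inS e e.
Proof. by exists 1; rewrite mul1r. Qed.

Lemma inS_mull e a b : inS e a -> inS e (b * a).
Proof. by case=> c ->; exists (b * c); rewrite mulrA. Qed.

Lemma inSP e a : central_idem e -> inS e a <-> a = a * e.
Proof. by move=> [ee _]; split=> [[b ->]|->]; [rewrite -mulrA ee | exists a]. Qed.

Lemma inS_mulr e a b : central_idem e -> inS e a -> inS e (a * b).
Proof. by move=> [_ ce] [c ->]; exists (c * b); rewrite -mulrA ce mulrA. Qed.

Lemma central_idem_eq e f :
  central_idem e -> central_idem f -> (forall a, inS e a <-> inS f a) -> e = f.
Proof.
move=> ce cf eq_ef.
have /(inSP _ cf) ef : inS f e by apply/eq_ef/inS_self.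
have /(inSP _ ce) fe : inS e f by apply/eq_ef/inS_self.
by rewrite ef {2}fe (proj2 cf).
Qed.

End Ideals.

Section DirectSum.

Variables (O : finType) (S : pzRingType) (ex : O -> S).
Hypothesis sumS : direct_sum_objects ex.

Lemma direct_sum_transport (P : S -> Prop) (phi psi : O -> S -> S) :
    (forall y c, P c -> inS (ex y) (phi y c)) ->
    (forall y b, inS (ex y) b -> P (psi y b) /\ phi y (psi y b) = b) ->
    (forall y c c', P c -> P c' -> phi y c = phi y c' -> c = c') ->
  forall a, exists c,
    ((forall y, P (c y)) /\ a = \sum_(y : O) phi y (c y)) /\
    (forall c', (forall y, P (c' y)) ->
       a = \sum_(y : O) phi y (c' y) -> forall y, c' y = c y).
Proof.
move=> phi_inS psiK phi_inj a; have [[f [f_inS ->]] uniq] := sumS a.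
exists (fun y => psi y (f y)); split.
  split=> [y|]; first exact: (psiK y _ (f_inS y)).1.
  by apply: eq_bigr => y _; rewrite (psiK y _ (f_inS y)).2.
move=> c' Pc' eq_sum y; apply: (phi_inj y) => //; first exact: (psiK y _ (f_inS y)).1.
rewrite (psiK y _ (f_inS y)).2.
exact: (uniq _ f (fun y => phi_inS y _ (Pc' y)) f_inS (esym eq_sum)).
Qed.

Hypothesis ex_central : forall y, central_idem (ex y).

Lemma direct_sum_orthogonal w y : w != y -> ex w * ex y = 0.
Proof.
move=> neq_wy; set p := ex w * ex y.
have p_w : inS (ex w) p by apply/inS_mulr/inS_self.
have p_y : inS (ex y) p by apply/inS_mull/inS_self.
pose single (z v : O) := if v == z then p else 0.
have single_inS z : inS (ex z) p -> forall v, inS (ex v) (single z v).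
  by move=> pz v; rewrite /single; case: eqP => [->|_] //; exists 0; rewrite mul0r.
have sum_single z : \sum_v single z v = p.
  by rewrite (bigD1 z) //= big1 ?addr0 /single ?eqxx // => v /negbTE ->.
have [_ uniq] := sumS p.
have := uniq _ _ (single_inS w p_w) (single_inS y p_y) _ w.
by rewrite /single eqxx (negbTE neq_wy) !sum_single; apply.
Qed.

Lemma direct_sum_mul_component (f : O -> S) y0 q :
  (forall y, inS (ex y) (f y)) -> q * ex y0 = q ->
  (\sum_y f y) * q = f y0 * q.
Proof.
move=> f_inS q_y0; rewrite mulr_suml (bigD1 y0) //= big1 ?addr0 // => w neq_w.
have /(inSP _ (ex_central w)) -> := f_inS w.
rewrite -q_y0 -mulrA (proj2 (ex_central w)) -(mulrA q).
by rewrite direct_sum_orthogonal ?mulr0 // eq_sym.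
Qed.

End DirectSum.

Section Groupoid.

Variables (G O : Type) (s t : G -> O) (idm : O -> G) (inv : G -> G).
Variable mul : G -> G -> G.
Hypothesis gpdG : is_groupoid s t idm inv mul.

Let s_mul := gpd_s_mul gpdG.
Let t_mul := gpd_t_mul gpdG.
Let mulA := gpd_mulA gpdG.
Let mul1g := gpd_mul1g gpdG.
Let mulg1 := gpd_mulg1 gpdG.
Let s_inv := gpd_s_inv gpdG.
Let t_inv := gpd_t_inv gpdG.
Let mulVg := gpd_mulVg gpdG.
Let mulgV := gpd_mulgV gpdG.

Lemma gpd_invK g : inv (inv g) = g.
Proof.
rewrite -[inv (inv g)]mulg1 s_inv t_inv -mulVg -mulA ?s_inv ?t_inv //.
by rewrite mulVg s_inv mul1g.
Qed.

Lemma gpd_mulKVg g h : t h = t g -> mul g (mul (inv g) h) = h.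
Proof. by move=> tgh; rewrite -mulA ?s_inv ?t_inv // mulgV -tgh mul1g. Qed.

Lemma gpd_mul_invM g h : s g = t h -> mul h (inv (mul g h)) = inv g.
Proof.
move=> sgh; have smul : s (mul g h) = s h by apply: s_mul.
have tmul : t (mul g h) = t g by apply: t_mul.
have tl : t (mul h (inv (mul g h))) = t h by rewrite t_mul // t_inv smul.
rewrite -[mul h _]mul1g tl -sgh -mulVg mulA ?s_inv ?tl //.
by rewrite -(@mulA g h) ?t_inv ?smul // mulgV tmul -s_inv mulg1.
Qed.

Section PartialAction.

Variables (S : pzRingType) (e : G -> S) (alpha : G -> S -> S).
Hypothesis actS : unital_partial_action s t idm inv mul e alpha.

Lemma pact_central g : central_idem (e g).
Proof. by have [central _] := actS; apply: central. Qed.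

Let inS_idm_t g a : inS (e g) a -> inS (e (idm (t g))) a.
Proof. by have [_ [ideal _]] := actS; apply: ideal. Qed.

Let alpha_inS g a : inS (e (inv g)) a -> inS (e g) (alpha g a).
Proof. by have [_ [_ [ran _]]] := actS; apply: ran. Qed.

Let alphaM g a b : inS (e (inv g)) a -> inS (e (inv g)) b ->
  alpha g (a * b) = alpha g a * alpha g b.
Proof. by have [_ [_ [_ [_ [morph _]]]]] := actS; apply: morph. Qed.

Let alpha_inj g a b : inS (e (inv g)) a -> inS (e (inv g)) b ->
  alpha g a = alpha g b -> a = b.
Proof. by have [_ [_ [_ [_ [_ [inj _]]]]]] := actS; apply: inj. Qed.

Let alpha_idm y a : inS (e (idm y)) a -> alpha (idm y) a = a.
Proof. by have [_ [_ [_ [_ [_ [_ [_ [id _]]]]]]]] := actS; apply: id. Qed.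

Let alpha_comp g h a : s g = t h -> inS (e (inv h)) a ->
    inS (e (inv g)) (alpha h a) ->
  inS (e (inv (mul g h))) a /\ alpha g (alpha h a) = alpha (mul g h) a.
Proof. by have [_ [_ [_ [_ [_ [_ [_ [_ comp]]]]]]]] := actS; apply: comp. Qed.

Lemma e_idm_t g : e g * e (idm (t g)) = e g.
Proof. by apply/esym/(inSP _ (pact_central _))/inS_idm_t/inS_self. Qed.

Lemma inS_inv_idm_s g a : inS (e (inv g)) a -> inS (e (idm (s g))) a.
Proof. by rewrite -t_inv; apply: inS_idm_t. Qed.

Lemma e_inv_idm_s g : e (inv g) * e (idm (s g)) = e (inv g).
Proof. by rewrite -t_inv e_idm_t. Qed.

Lemma alpha_invK g a : inS (e (inv g)) a -> alpha (inv g) (alpha g a) = a.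
Proof.
move=> a_dom; have ga_dom : inS (e (inv (inv g))) (alpha g a).
  by rewrite gpd_invK; apply: alpha_inS.
have [_ ->] := alpha_comp (s_inv g) a_dom ga_dom.
by rewrite mulVg alpha_idm //; apply: inS_inv_idm_s.
Qed.

Lemma alpha_inv_inS g b : inS (e g) b -> inS (e (inv g)) (alpha (inv g) b).
Proof. by move=> b_ran; apply: alpha_inS; rewrite gpd_invK. Qed.

Lemma alpha_invVK g b : inS (e g) b -> alpha g (alpha (inv g) b) = b.
Proof. by move=> b_ran; rewrite -{1}(gpd_invK g) alpha_invK ?gpd_invK. Qed.

Lemma alpha_e g : alpha g (e (inv g)) = e g.
Proof.
set b := alpha (inv g) (e g).
have b_dom : inS (e (inv g)) b := alpha_inv_inS (inS_self _).
have gb : alpha g b = e g := alpha_invVK (inS_self _).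
have /(inSP _ (pact_central _)) -> := alpha_inS (inS_self (e (inv g))).
rewrite -{1}gb -alphaM //; last exact: inS_self.
by rewrite (proj2 (pact_central _)) -(proj1 (inSP _ (pact_central _)) b_dom).
Qed.

Lemma alpha_comp_inv g h a : s g = t h ->
    inS (e (inv (mul g h))) a -> inS (e (inv h)) a ->
  inS (e (inv g)) (alpha h a) /\ alpha g (alpha h a) = alpha (mul g h) a.
Proof.
move=> sgh a_dom_gh a_dom_h; set m := mul g h.
have sh : s h = t (inv m) by rewrite t_inv /m s_mul.
have ma_dom : inS (e (inv (inv m))) (alpha m a) by rewrite gpd_invK; apply: alpha_inS.
have [|h_dom h_comp] := alpha_comp sh ma_dom; first by rewrite alpha_invK.
rewrite alpha_invK // /m gpd_mul_invM // in h_dom h_comp.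
split; first by rewrite h_comp; apply: alpha_inS.
by apply: (proj2 (alpha_comp sgh a_dom_h _)); rewrite h_comp; apply: alpha_inS.
Qed.

Section Transversal.

Variables (x : O) (tau : O -> G).
Hypothesis tau_st : forall y, s (tau y) = x /\ t (tau y) = y.
Hypothesis tau_dom : forall y a, inS (e (inv (tau y))) a <-> inS (e (idm x)) a.
Hypothesis tau_ran : forall y a, inS (e (tau y)) a <-> inS (e (idm y)) a.

Let tau_s y : s (tau y) = x := proj1 (tau_st y).
Let tau_t y : t (tau y) = y := proj2 (tau_st y).

Lemma e_inv_tau y : e (inv (tau y)) = e (idm x).
Proof. exact: central_idem_eq (pact_central _) (pact_central _) (tau_dom y). Qed.

Lemma e_tau y : e (tau y) = e (idm y).
Proof. exact: central_idem_eq (pact_central _) (pact_central _) (tau_ran y). Qed.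

Lemma alpha_tau_inS y c : inS (e (idm x)) c -> inS (e (idm y)) (alpha (tau y) c).
Proof. by rewrite -(e_inv_tau y) -(e_tau y); apply: alpha_inS. Qed.

Lemma alpha_tau_inv_inS y b :
  inS (e (idm y)) b -> inS (e (idm x)) (alpha (inv (tau y)) b).
Proof. by rewrite -(e_tau y) -(e_inv_tau y); apply: alpha_inv_inS. Qed.

Lemma alpha_tau_inj y c c' : inS (e (idm x)) c -> inS (e (idm x)) c' ->
  alpha (tau y) c = alpha (tau y) c' -> c = c'.
Proof. by rewrite -(e_inv_tau y); apply: alpha_inj. Qed.

Definition tau_conj g := mul (mul (inv (tau (t g))) g) (tau (s g)).

Lemma tau_conjE g : tau_conj g = mul (inv (tau (t g))) (mul g (tau (s g))).
Proof. by rewrite /tau_conj mulA ?s_inv ?tau_t. Qed.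

Lemma s_tau_conj g : s (tau_conj g) = x.
Proof. by rewrite /tau_conj s_mul ?tau_s // s_mul ?s_inv ?tau_t. Qed.

Lemma t_tau_conj g : t (tau_conj g) = x.
Proof. by rewrite tau_conjE t_mul ?t_inv ?tau_s // s_inv t_mul ?tau_t. Qed.

Lemma mul_tau_conj g : mul (tau (t g)) (tau_conj g) = mul g (tau (s g)).
Proof. by rewrite tau_conjE gpd_mulKVg // t_mul ?tau_t. Qed.

Lemma alpha_tau_conj g w : inS (e (inv (tau_conj g))) w ->
  inS (e (inv g)) (alpha (tau (s g)) w) /\
  alpha (tau (t g)) (alpha (tau_conj g) w) = alpha g (alpha (tau (s g)) w).
Proof.
move=> w_dom; have w_x : inS (e (idm x)) w by rewrite -(s_tau_conj g); apply: inS_inv_idm_s.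
have kw_ran : inS (e (inv (tau (t g)))) (alpha (tau_conj g) w).
  by rewrite e_inv_tau -(t_tau_conj g); apply/inS_idm_t/alpha_inS.
have [] := alpha_comp (etrans (tau_s _) (esym (t_tau_conj g))) w_dom kw_ran.
rewrite mul_tau_conj => w_dom_m ->.
have w_dom_tau : inS (e (inv (tau (s g)))) w by rewrite e_inv_tau.
by have [? ->] := alpha_comp_inv (esym (tau_t (s g))) w_dom_m w_dom_tau.
Qed.

Lemma inS_inv_tau_conj g w : inS (e (idm x)) w ->
  inS (e (inv g)) (alpha (tau (s g)) w) -> inS (e (inv (tau_conj g))) w.
Proof.
move=> w_x w_g; have sg : s g = t (tau (s g)) by rewrite tau_t.
have w_dom_tau : inS (e (inv (tau (s g)))) w by rewrite e_inv_tau.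
have [w_dom_m _] := alpha_comp sg w_dom_tau w_g.
have mw_ran : inS (e (inv (inv (tau (t g))))) (alpha (mul g (tau (s g))) w).
  by rewrite gpd_invK e_tau -(t_mul sg); apply/inS_idm_t/alpha_inS.
have [] := alpha_comp _ w_dom_m mw_ran; first by rewrite s_inv t_mul ?tau_t.
by rewrite -tau_conjE.
Qed.

Lemma alpha_tau_e_inv_conj g : alpha (tau (s g)) (e (inv (tau_conj g))) = e (inv g).
Proof.
have [ek_g _] := alpha_tau_conj (inS_self (e (inv (tau_conj g)))).
rewrite (proj1 (inSP _ (pact_central _)) ek_g).
have eg_s : inS (e (idm (s g))) (e (inv g)) by apply/inS_inv_idm_s/inS_self.
set w := alpha (inv (tau (s g))) (e (inv g)).
have w_x : inS (e (idm x)) w := alpha_tau_inv_inS eg_s.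
have tw : alpha (tau (s g)) w = e (inv g) by apply: alpha_invVK; rewrite e_tau.
have tw_g : inS (e (inv g)) (alpha (tau (s g)) w) by rewrite tw; apply: inS_self.
have /(inSP _ (pact_central _)) w_k := inS_inv_tau_conj w_x tw_g.
rewrite -{2}tw w_k alphaM ?e_inv_tau //; last first.
  by rewrite -(s_tau_conj g); apply/inS_inv_idm_s/inS_self.
by rewrite tw (proj2 (pact_central _)).
Qed.

Lemma alpha_tau_e_conj g : alpha (tau (t g)) (e (tau_conj g)) = e g.
Proof.
rewrite -alpha_e (proj2 (alpha_tau_conj (inS_self _))).
by rewrite alpha_tau_e_inv_conj alpha_e.
Qed.

Lemma invariance_tau_conj g cy cz : inS (e (idm x)) cy -> inS (e (idm x)) cz ->
  alpha g (alpha (tau (s g)) cy * e (inv g)) = alpha (tau (t g)) cz * e g <->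
  alpha (tau_conj g) (cy * e (inv (tau_conj g))) = cz * e (tau_conj g).
Proof.
move=> cy_x cz_x; set k := tau_conj g.
have ek_x : inS (e (idm x)) (e k) by rewrite -(t_tau_conj g); apply/inS_idm_t/inS_self.
have eik_x : inS (e (idm x)) (e (inv k)).
  by rewrite -(s_tau_conj g); apply/inS_inv_idm_s/inS_self.
have cyk_dom : inS (e (inv k)) (cy * e (inv k)) by apply/inS_mull/inS_self.
rewrite -(alpha_tau_e_inv_conj g) -alphaM ?e_inv_tau //.
rewrite -(proj2 (alpha_tau_conj cyk_dom)) -(alpha_tau_e_conj g) -alphaM ?e_inv_tau //.
split=> [|-> //]; apply: alpha_tau_inj; last by apply: inS_mulr (pact_central _) _.
by rewrite -(t_tau_conj g); apply/inS_idm_t/alpha_inS.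
Qed.

End Transversal.

End PartialAction.

End Groupoid.

Theorem proposition3p1
  (G O : finType) (s t : G -> O) (idm : O -> G) (inv : G -> G)
  (mul : G -> G -> G) (S : pzRingType) (e : G -> S) (alpha : G -> S -> S)
  (Hgpd : is_groupoid s t idm inv mul)
  (Hconn : gpd_connected s t)
  (Hact : unital_partial_action s t idm inv mul e alpha)
  (Hsum : direct_sum_objects (fun y => e (idm y)))
  (x : O) (tau : O -> G)
  (Htau_st : forall y, s (tau y) = x /\ t (tau y) = y)
  (Htau_x : tau x = idm x)
  (Htau_inv : forall y a, inS (e (inv (tau y))) a <-> inS (e (idm x)) a)
  (Htau : forall y a, inS (e (tau y)) a <-> inS (e (idm y)) a) :
  let tauG := fun g => mul (mul (inv (tau (t g))) g) (tau (s g)) in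
  (forall a : S,
     exists c : O -> S,
       ((forall y, inS (e (idm x)) (c y)) /\
        a = \sum_(y : O) alpha (tau y) (c y)) /\
       (forall c' : O -> S, (forall y, inS (e (idm x)) (c' y)) ->
          a = \sum_(y : O) alpha (tau y) (c' y) -> forall y, c' y = c y)) /\
  (forall (a : S) (c : O -> S),
     (forall y, inS (e (idm x)) (c y)) ->
     a = \sum_(y : O) alpha (tau y) (c y) ->
     (in_invariant_subring inv e alpha a <->
      forall g : G,
        alpha (tauG g) (c (s g) * e (inv (tauG g))) = c (t g) * e (tauG g))).
Proof.
move=> tauG; split.
  apply: (direct_sum_transport Hsum (P := inS (e (idm x))) (phi := fun y => alpha (tau y))
    (psi := fun y => alpha (inv (tau y)))) => y.
  - move=> c; exact: (alpha_tau_inS Hact Htau_inv Htau y).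
  - move=> b b_y; split; first exact: (alpha_tau_inv_inS Hgpd Hact Htau_inv Htau b_y).
    by apply: (alpha_invVK Hgpd Hact); rewrite (e_tau Hact Htau).
  - move=> c c' cx c'x; exact: (alpha_tau_inj Hact Htau_inv cx c'x).
move=> a c c_x ->.
have c_inS y : inS (e (idm y)) (alpha (tau y) (c y)).
  exact: (alpha_tau_inS Hact Htau_inv Htau y (c_x y)).
have component := direct_sum_mul_component Hsum (fun y => pact_central Hact _) c_inS.
have invariant_at g : alpha g ((\sum_y alpha (tau y) (c y)) * e (inv g)) =
    (\sum_y alpha (tau y) (c y)) * e g <->
    alpha (tauG g) (c (s g) * e (inv (tauG g))) = c (t g) * e (tauG g).
  rewrite (component _ _ (e_inv_idm_s Hgpd Hact g)) (component _ _ (e_idm_t Hact g)).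
  exact: (invariance_tau_conj Hgpd Hact Htau_st Htau_inv Htau g (c_x _) (c_x _)).
by split=> inv_a g; apply/invariant_at/inv_a.
Qed.
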